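(* Let $2\le k\le n$ be integers and let $G$ be a graph on $n$ vertices. Then $bp(G)\le n-k$ if and only if $G$ has a special subgraph of order $k$.
   Context: $bp(G)$ is the minimum number of pairwise edge-disjoint complete bipartite subgraphs (bicliques) of $G$ covering every edge exactly once. A biclique is a star if one of its two parts has exactly one vertex; a non-star biclique is a complete bipartite graph $K_{a,b}$ with $a,b\ge 2$. An induced subgraph $H$ of $G$ is a special subgraph of order $k$ if for some integer $r\ge 0$, $H$ has exactly $k+r$ vertices and the edge set of $H$ can be partitioned into at most $r$ pairwise edge-disjoint non-star bicliques (in particular an independent set of size $k$ is a special subgraph of order $k$, with $r=0$). *)

From mathcomp Require Import all_boot.
Set Implicit Arguments. Unset Strict Implicit. Unset Printing Implicit Defensive.

Record sgraph (T : finType) := SGraph {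
  sg_adj : rel T;
  sg_sym : symmetric sg_adj;
  sg_irr : irreflexive sg_adj }.

Section Bicliques.
Variables (T : finType) (adj : rel T).

Definition is_biclique (p : {set T} * {set T}) : bool :=
  [&& p.1 != set0, p.2 != set0, [disjoint p.1 & p.2] &
      [forall a in p.1, forall b in p.2, adj a b]].

Definition is_nonstar (p : {set T} * {set T}) : bool :=
  (2 <= #|p.1|) && (2 <= #|p.2|).

Definition covers (p : {set T} * {set T}) (x y : T) : bool :=
  ((x \in p.1) && (y \in p.2)) || ((y \in p.1) && (x \in p.2)).

Definition bp_decomp (s : seq ({set T} * {set T})) : bool :=
  all is_biclique s &&
  [forall x, forall y, adj x y ==> (count (fun p => covers p x y) s == 1)].

Definition has_bp_decomp (m : nat) : bool :=
  [exists t : m.-tuple ({set T} * {set T}), bp_decomp t].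

End Bicliques.

Lemma bp_exists (T : finType) (G : sgraph T) :
  exists m, has_bp_decomp (sg_adj G) m.
Proof.
set adj := sg_adj G.
pose L x := [set y | adj x y && (enum_rank x < enum_rank y)].
pose s := [seq ([set x], L x) | x <- enum T & L x != set0].
have Hs : bp_decomp adj s.
  apply/andP; split.
    apply/allP => p /mapP [x]; rewrite mem_filter => /andP [Lx _] ->.
    apply/and4P; split => //=.
    - by apply/set0Pn; exists x; rewrite in_set1.
    - rewrite disjoints1 inE ltnn andbF //.
    - apply/forallP => a; apply/implyP; rewrite in_set1 => /eqP ->.
      by apply/forallP => b; apply/implyP; rewrite inE => /andP [].
  have key : forall u v, adj u v -> enum_rank u < enum_rank v ->
      count (fun p => covers p u v) s = 1.
    move=> u v huv ruv; rewrite count_map.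
    have -> : count (preim (fun x => ([set x], L x)) (fun p => covers p u v))
        [seq x <- enum T | L x != set0] =
        count (pred1 u) [seq x <- enum T | L x != set0].
      apply: eq_count => x /=; rewrite /covers /= !in_set1 !inE.
      case: (eqVneq x u) => [->|xu] /=; first by rewrite huv ruv.
      case: (eqVneq x v) => [->|xv] /=; last by [].
      by rewrite ltnNge (ltnW ruv) andbF.
    rewrite count_uniq_mem; last by rewrite filter_uniq // enum_uniq.
    rewrite mem_filter mem_enum andbT.
    suff -> : L u != set0 by [].
    by apply/set0Pn; exists v; rewrite inE huv ruv.
  apply/forallP => x; apply/forallP => y; apply/implyP => hxy.
  case: (ltngtP (enum_rank x) (enum_rank y)) => r.
  - by rewrite key.
  - have -> : count (fun p => covers p x y) s = count (fun p => covers p y x) s.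
      by apply: eq_count => p; rewrite /covers orbC.
    by rewrite key // /adj sg_sym.
  - by move/val_inj/enum_rank_inj: r => r; subst y; rewrite /adj sg_irr in hxy.
exists (size s); apply/existsP; exists (in_tuple s); exact: Hs.
Qed.

Definition bp (T : finType) (G : sgraph T) : nat := ex_minn (bp_exists G).

Definition induced_adj (T : finType) (G : sgraph T) (S : {set T}) : rel T :=
  fun x y => [&& x \in S, y \in S & sg_adj G x y].

Definition has_special_subgraph (T : finType) (G : sgraph T) (k : nat) : Prop :=
  exists (S : {set T}) (r : nat) (s : seq ({set T} * {set T})),
    [/\ #|S| = k + r, size s <= r, all (@is_nonstar T) s &
        bp_decomp (induced_adj G S) s].

From mathcomp Require Import all_boot.
From mathcomp Require Import zify.
Set Implicit Arguments. Unset Strict Implicit. Unset Printing Implicit Defensive.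

(* If an edge partition into m bicliques contains a star with centre v,
   deleting v and restricting every biclique to the remaining vertices
   destroys that star, so the vertex count drops by one and the number of
   bicliques by at least one.  Iterating until only non-stars remain turns an
   m-partition of G into a special subgraph of order n - m.  Conversely, an
   induced subgraph partitioned into r non-stars extends to an edge partition
   of G by adding back the missing vertices one by one, each new vertex
   costing at most one star; a special subgraph of order k on k + r vertices
   thus yields at most r + (n - k - r) = n - k bicliques. *)

Section Bicliques.
Variable T : finType.
Implicit Types (S : {set T}) (p : {set T} * {set T}) (s : seq ({set T} * {set T})).

Lemma eq_bp_decomp (adj1 adj2 : rel T) s :
  adj1 =2 adj2 -> bp_decomp adj1 s = bp_decomp adj2 s.
Proof.
move=> e; rewrite /bp_decomp.
have -> : all (is_biclique adj1) s = all (is_biclique adj2) s.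
  apply: eq_all => p; rewrite /is_biclique.
  by under eq_forallb do under eq_forallb do rewrite e.
by under eq_forallb do under eq_forallb do rewrite e.
Qed.

Lemma sub_biclique (adj1 adj2 : rel T) p :
  subrel adj1 adj2 -> is_biclique adj1 p -> is_biclique adj2 p.
Proof.
move=> sub12 /and4P [n1 n2 dis /forallP H]; apply/and4P; split => //.
apply/forallP => a; apply/implyP => ha; apply/forallP => b; apply/implyP => hb.
by apply: sub12; move: (H a); rewrite ha /= => /forallP /(_ b); rewrite hb.
Qed.

Definition restrict_biclique S p : {set T} * {set T} := (p.1 :&: S, p.2 :&: S).

Definition nonempty_parts p : bool := (p.1 != set0) && (p.2 != set0).

Definition restrict_decomp S s : seq ({set T} * {set T}) :=
  [seq q <- map (restrict_biclique S) s | nonempty_parts q].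

Lemma size_restrict_decomp S s p : p \in s ->
  ~~ nonempty_parts (restrict_biclique S p) -> size (restrict_decomp S s) < size s.
Proof.
move=> ps hp; rewrite /restrict_decomp size_filter count_map.
rewrite -(count_predC (preim (restrict_biclique S) nonempty_parts) s).
rewrite -[X in X < _]addn0 ltn_add2l -has_count.
by apply/hasP; exists p.
Qed.

End Bicliques.

Section Decompositions.
Variables (T : finType) (G : sgraph T).
Implicit Types (S : {set T}) (s : seq ({set T} * {set T})).

Lemma induced_adjT : induced_adj G setT =2 sg_adj G.
Proof. by move=> x y; rewrite /induced_adj !inE. Qed.

Lemma biclique_induced_sub S p : is_biclique (induced_adj G S) p ->
  {subset p.1 <= S} /\ {subset p.2 <= S}.
Proof.
move/and4P=> [/set0Pn [a Ha] /set0Pn [b Hb] _ /forallP H]; split=> x Hx.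
- by move: (H x); rewrite Hx /= => /forallP /(_ b); rewrite Hb /= => /and3P [].
- by move: (H a); rewrite Ha /= => /forallP /(_ x); rewrite Hx /= => /and3P [].
Qed.

Lemma covers_induced S p x y : is_biclique (induced_adj G S) p -> covers p x y ->
  (x \in S) && (y \in S).
Proof.
move=> /biclique_induced_sub [h1 h2]; rewrite /covers.
by case/orP => /andP [a b]; rewrite (h1 _ a) (h2 _ b).
Qed.

Lemma star_centre S p : is_biclique (induced_adj G S) p -> ~~ is_nonstar p ->
  exists2 v, v \in S & p.1 = [set v] \/ p.2 = [set v].
Proof.
move=> hp; have [sub1 sub2] := biclique_induced_sub hp.
move: hp => /and4P [/set0Pn [a a1] /set0Pn [b b2] _ _].
rewrite /is_nonstar negb_and -!ltnNge; case/orP => small.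
- have /cards1P [v e1] : #|p.1| == 1.
    by rewrite eqn_leq -ltnS small card_gt0; apply/set0Pn; exists a.
  by exists v; [apply: sub1; rewrite e1 set11 | left].
- have /cards1P [v e2] : #|p.2| == 1.
    by rewrite eqn_leq -ltnS small card_gt0; apply/set0Pn; exists b.
  by exists v; [apply: sub2; rewrite e2 set11 | right].
Qed.

Lemma bp_decomp_restrict S S1 s : S1 \subset S ->
  bp_decomp (induced_adj G S) s -> bp_decomp (induced_adj G S1) (restrict_decomp S1 s).
Proof.
move=> /subsetP sub /andP [hbic hcnt]; apply/andP; split.
  apply/allP => q; rewrite mem_filter => /andP [nq /mapP [p ps eq_q]].
  move: nq; rewrite eq_q => /andP [q1 q2].
  move: (allP hbic p ps) => /and4P [_ _ hdis /forallP H].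
  apply/and4P; split => //=; first by apply: disjointW hdis; apply: subsetIl.
  apply/forallP => a; apply/implyP; rewrite inE => /andP [ha aS1].
  apply/forallP => b; apply/implyP; rewrite inE => /andP [hb bS1].
  move: (H a); rewrite ha /= => /forallP /(_ b); rewrite hb /=.
  by rewrite /induced_adj aS1 bS1 => /and3P [].
apply/forallP => x; apply/forallP => y; apply/implyP => /and3P [xS1 yS1 xy].
have := forallP (forallP hcnt x) y; rewrite /induced_adj (sub _ xS1) (sub _ yS1) xy /=.
have covers_restrict q : covers (restrict_biclique S1 q) x y = covers q x y.
  by rewrite /covers /= !in_setI xS1 yS1 !andbT.
rewrite /restrict_decomp count_filter count_map.
congr (_ == 1); apply: eq_count => q /=; rewrite /preim /= covers_restrict.
case cq: (covers q x y); rewrite ?andbF //=; apply/esym.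
move: cq; rewrite -covers_restrict /covers /nonempty_parts.
by case/orP => /andP [h1 h2]; apply/andP; split; apply/set0Pn; eexists; eassumption.
Qed.

Lemma bp_decomp_remove_stars S s : bp_decomp (induced_adj G S) s ->
  exists (S' : {set T}) s', [/\ size s' + #|S| <= size s + #|S'|,
    all (@is_nonstar T) s' & bp_decomp (induced_adj G S') s'].
Proof.
have [m] := ubnP (size s); elim: m => // m IH in S s *; rewrite ltnS => small hd.
have [nonstar | /allPn [p ps star]] := boolP (all (@is_nonstar T) s).
  by exists S, s.
have [v vS centre] := star_centre (allP (proj1 (andP hd)) p ps) star.
have hd1 := bp_decomp_restrict (subsetDl S [set v]) hd.
have lt_size : size (restrict_decomp (S :\ v) s) < size s.
  apply: size_restrict_decomp ps _; rewrite /nonempty_parts /= negb_and !negbK.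
  have centre_gone : [set v] :&: (S :\ v) == set0.
    by apply/eqP/setP => x; rewrite !inE; case: eqVneq.
  by case: centre => ->; rewrite centre_gone ?orbT.
have [S' [s' [le_size nonstar' hd']]] := IH _ _ (leq_trans lt_size small) hd1.
exists S', s'; split => //.
by move: le_size; rewrite (cardsD1 v S) vS; lia.
Qed.

Lemma count_covers_induced S s x y : bp_decomp (induced_adj G S) s -> sg_adj G x y ->
  count (fun p => covers p x y) s = (x \in S) && (y \in S).
Proof.
move=> /andP [hbic hcnt] xy.
have [/andP [xS yS] | outside] := boolP ((x \in S) && (y \in S)).
  by apply/eqP; have := forallP (forallP hcnt x) y; rewrite /induced_adj xS yS xy.
rewrite (@eq_in_count _ _ pred0) ?count_pred0 // => p ps /=.
by apply: contraNF outside; apply: covers_induced (allP hbic p ps).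
Qed.

Lemma induced_adj_setU1 S v x y : v \notin S -> induced_adj G (v |: S) x y ->
  [\/ (x \in S) && (y \in S) && sg_adj G x y,
      (x == v) && (y \in [set z in S | sg_adj G v z])
    | (y == v) && (x \in [set z in S | sg_adj G v z])].
Proof.
move=> vS /and3P []; rewrite !in_setU1 => /orP [/eqP ->|xS] /orP [/eqP ->|yS] xy.
- by rewrite sg_irr in xy.
- by constructor 2; rewrite eqxx inE yS xy.
- by constructor 3; rewrite eqxx inE xS sg_sym xy.
- by constructor 1; rewrite xS yS xy.
Qed.

Lemma bp_decomp_setU1 S v s : v \notin S -> bp_decomp (induced_adj G S) s ->
  exists2 s', size s' <= (size s).+1 & bp_decomp (induced_adj G (v |: S)) s'.
Proof.
move=> vS hd; set N := [set z in S | sg_adj G v z].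
have sub_adj : subrel (induced_adj G S) (induced_adj G (v |: S)).
  by move=> a b /and3P [aS bS ab]; rewrite /induced_adj !in_setU1 aS bS ab !orbT.
have hbic : all (is_biclique (induced_adj G (v |: S))) s.
  by apply/allP => p ps; apply: sub_biclique sub_adj (allP (proj1 (andP hd)) p ps).
have [N0 | /set0Pn [w wN]] := eqVneq N set0.
  exists s => //; apply/andP; split => //.
  apply/forallP => x; apply/forallP => y; apply/implyP => hxy.
  have xy : sg_adj G x y by case/and3P: hxy.
  have := induced_adj_setU1 vS hxy; rewrite -/N N0 !in_set0 !andbF.
  case=> // /andP [xyS _].
  by rewrite (count_covers_induced hd xy) xyS.
exists (([set v], N) :: s) => //; apply/andP; split.
  rewrite /= hbic andbT; apply/and4P; split => //=.
  - by apply/set0Pn; exists v; rewrite set11.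
  - by apply/set0Pn; exists w.
  - by rewrite disjoints1 inE (negbTE vS).
  - apply/forallP => a; apply/implyP; rewrite inE => /eqP ->.
    apply/forallP => b; apply/implyP; rewrite inE => /andP [bS vb].
    by rewrite /induced_adj setU11 in_setU1 bS orbT vb.
apply/forallP => x; apply/forallP => y; apply/implyP => hxy.
have xy : sg_adj G x y by case/and3P: hxy.
rewrite /= (count_covers_induced hd xy) /covers /= !in_set1.
have notv z : z \in S -> (z == v) = false.
  by move=> zS; apply: contraNF vS => /eqP <-.
case/(induced_adj_setU1 vS): hxy => /andP [].
- by move=> /andP [xS yS] _; rewrite xS yS !notv.
- by move=> /eqP -> yN; rewrite eqxx yN (negbTE vS).
- by move=> /eqP -> xN; rewrite eqxx xN (negbTE vS) andbF orbT.
Qed.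

Lemma bp_decomp_extend S s : bp_decomp (induced_adj G S) s ->
  exists2 s', size s' <= size s + (#|T| - #|S|) & bp_decomp (sg_adj G) s'.
Proof.
move def_d: (#|T| - #|S|) => d; elim: d => [|d IH] in S s def_d *.
  have -> : S = setT by apply/eqP; rewrite eqEcard subsetT cardsT; lia.
  by rewrite (eq_bp_decomp _ induced_adjT) addn0; exists s.
have /subsetPn [v _ vS] : ~~ (setT \subset S).
  by apply/negP => /subset_leq_card; rewrite cardsT; lia.
move=> /(bp_decomp_setU1 vS) [s1 le_s1 hd1].
have [|s' le_s' hd'] := IH (v |: S) s1 _ hd1; first by rewrite cardsU1 vS; lia.
by exists s' => //; lia.
Qed.

Lemma bp_le_size s : bp_decomp (sg_adj G) s -> bp G <= size s.
Proof.
move=> hd; rewrite /bp; case: ex_minnP => m _; apply.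
by apply/existsP; exists (in_tuple s).
Qed.

Lemma bp_decomp_bp : exists2 s, size s = bp G & bp_decomp (sg_adj G) s.
Proof.
by rewrite /bp; case: ex_minnP => m /existsP [t hd] _; exists t; rewrite ?size_tuple.
Qed.

End Decompositions.

Theorem mainTheorem2 (n k : nat) (T : finType) (G : sgraph T) :
  #|T| = n -> 2 <= k -> k <= n ->
  (bp G <= n - k <-> has_special_subgraph G k).
Proof.
move=> <- _ le_kn; split.
- have [s <- hd] := bp_decomp_bp G; rewrite -(eq_bp_decomp _ (induced_adjT G)) in hd.
  have [S [s' [le_size nonstar hd']]] := bp_decomp_remove_stars hd.
  rewrite cardsT in le_size; move=> le_s.
  by exists S, (#|S| - k), s'; split => //; lia.
- case=> S [r [s [cardS le_r _ hd]]].
  have [s' le_s' hd'] := bp_decomp_extend hd.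
  have := max_card S; have := bp_le_size hd'; lia.
Qed.
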